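(* Let $(M,g)$ be a compact Riemannian manifold, $\phi:M\to S^n$ a smooth map, $a\in(0,1)$ and $F(t)=(1+2t)^a$. Let $v\in\mathbb{R}^{n+1}\setminus\{0\}$ be such that $\phi_v=\langle v,\phi\rangle\geq0$ on $M$, and suppose the tensor $S_g(\phi)=\frac12|d\phi|^2g-\phi^*can$ is positive (i.e. $S_g(\phi)(X,X)\geq0$ for all $X\in TM$). Then for every $t\geq0$, $B\geq0$ on $M$, and $S_g^F(\gamma_t^v\circ\phi)(X,X)\geq\alpha_t^4\circ\phi\cdot S_g^F(\phi)(X,X)$ for all $X\in TM$.
   Context: $S^n\subset\mathbb{R}^{n+1}$ unit sphere with canonical metric $can$. For $v\ne0$, $\bar v(y)=v-\langle v,y\rangle y$, $(\gamma_t^v)$ its flow, $(\gamma_t^v)^*can=\alpha_t^2can$ with $\alpha_t(y)=\frac{|v|}{|v|\cosh t+\langle v,y\rangle\sinh t}$. The $F$ stress-energy tensor is $S_g^F(\psi)=F'\left(\frac{|d\psi|^2}{2}\right)\frac{|d\psi|^2}{2}g-\left[F'\left(\frac{|d\psi|^2}{2}\right)+\frac{|d\psi|^2}{2}F''\left(\frac{|d\psi|^2}{2}\right)\right]\psi^*can$. $B:=\left(\frac{F''(\alpha_t^2\circ\phi\cdot\frac{|d\phi|^2}{2})}{F'(\alpha_t^2\circ\phi\cdot\frac{|d\phi|^2}{2})}\alpha_t^2\circ\phi-\frac{F''(\frac{|d\phi|^2}{2})}{F'(\frac{|d\phi|^2}{2})}\right)\phi_v$. *)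

From mathcomp Require Import all_boot all_order all_algebra.
From mathcomp Require Import all_classical all_reals all_analysis.
Set Implicit Arguments. Unset Strict Implicit. Unset Printing Implicit Defensive.
Import Order.TTheory GRing.Theory Num.Theory.
Local Open Scope ring_scope.

Section Defs.
Variable R : realType.

Definition coshr (t : R) : R := (expR t + expR (- t)) / 2.
Definition sinhr (t : R) : R := (expR t - expR (- t)) / 2.

Definition dot k (u w : 'rV[R]_k) : R := \sum_(i < k) u 0 i * w 0 i.
Definition enorm k (u : 'rV[R]_k) : R := Num.sqrt (dot u u).

Definition quad m (G : 'M[R]_m) (X : 'rV[R]_m) : R := (X *m G *m X^T) 0 0.

Definition conf_factor k (v : 'rV[R]_k) (t : R) (y : 'rV[R]_k) : R :=
  enorm v / (enorm v * coshr t + dot v y * sinhr t).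

(* The conformal flow gamma_t^v on S^k, in closed form (extended to a
   neighbourhood of the sphere in R^k).  It is the flow of y |-> u - <u,y> y. *)
Definition conf_flow k (v : 'rV[R]_k) (t : R) (y : 'rV[R]_k) : 'rV[R]_k :=
  let u := (enorm v)^-1 *: v in
  let w := dot u y in
  let al := (coshr t + w * sinhr t)^-1 in
  al *: (y - w *: u) + (al * (w * coshr t + sinhr t)) *: u.

Definition Fa (a : R) (s : R) : R := (1 + 2 * s) `^ a.
Definition F1 (a : R) : R -> R := derive1 (Fa a).
Definition F2 (a : R) : R -> R := derive1 (derive1 (Fa a)).

(* Energy density |d psi|^2/2 from metric matrix g (in a frame of T_xM)
   and the Gram matrix G_ij = <d psi e_i, d psi e_j>. *)
Definition half_energy m (g G : 'M[R]_m) : R := \tr (invmx g *m G) / 2.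

Definition gram m k (L : 'M[R]_(m, k)) : 'M[R]_m :=
  \matrix_(i, j) dot (row i L) (row j L).

(* differential of gamma_t^v o phi at x: rows e_i |-> d gamma (d phi e_i) *)
Definition dflow_comp m k (v : 'rV[R]_k) (t : R) (y : 'rV[R]_k) (L : 'M[R]_(m, k))
  : 'M[R]_(m, k) :=
  \matrix_(i, j) (derive (conf_flow v t) y (row i L)) 0 j.

(* F stress-energy tensor evaluated at (X,X), given e = |d psi|^2/2,
   gXX = g(X,X) and pXX = psi^*can(X,X) = |d psi X|^2. *)
Definition SF (F' F'' : R -> R) (e gXX pXX : R) : R :=
  F' e * e * gXX - (F' e + e * F'' e) * pXX.

Definition S0 (e gXX pXX : R) : R := e * gXX - pXX.

Definition Bq (F' F'' : R -> R) (al e phv : R) : R :=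
  (F'' (al ^+ 2 * e) / F' (al ^+ 2 * e) * al ^+ 2 - F'' e / F' e) * phv.

End Defs.

From mathcomp Require Import all_boot all_order all_algebra.
From mathcomp Require Import all_classical all_reals all_analysis.
From mathcomp Require Import ring lra.
Import Order.TTheory GRing.Theory Num.Theory numFieldNormedType.Exports.
Local Open Scope classical_set_scope.
Local Open Scope ring_scope.

(* The flow [gamma_t] of the conformal field [y |-> v - <v, y> y] is an explicit
   rational map, and differentiating it shows that it is conformal on [S^n] with factor
   [alpha_t]: on vectors tangent to the sphere, [|d gamma_t h|^2 = alpha_t^2 |h|^2].  Hence
   [(gamma_t o phi)^* can = alpha_t^2 phi^* can] and [|d (gamma_t o phi)|^2 = alpha_t^2 |d phi|^2],
   with [0 < alpha_t <= 1] because [<v, phi> >= 0] and [t >= 0].  For [F(s) = (1 + 2 s)^a]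
   one has [F''/F' = 2 (a - 1) / (1 + 2 s)], so
   [B = 2 (1 - a) (1 - alpha_t^2) phi_v / ((1 + 2 alpha_t^2 e) (1 + 2 e)) >= 0], and the
   stress-energy inequality becomes, pointwise and for each [X], a real inequality that
   follows from [S_g(phi)(X, X) >= 0] and the monotonicity of [x^(a-1)] and [x^(a-2)]. *)

Section PowR.
Context {R : realType}.

Lemma le0_ger_powR (r x y : R) : r <= 0 -> 0 < x -> x <= y -> y `^ r <= x `^ r.
Proof.
move=> r0 x0 xy; have y0 : 0 < y by apply: lt_le_trans xy.
have : x `^ (- r) <= y `^ (- r).
  by apply: ge0_ler_powR; rewrite ?oppr_ge0 // nnegrE ltW.
have inv_powRN z : z `^ r = (z `^ (- r))^-1 by rewrite -powRN opprK.
by rewrite (inv_powRN x) (inv_powRN y) lef_pV2 // posrE powR_gt0.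
Qed.

Lemma powR_subr1 (x r : R) : 0 < x -> x `^ r = x `^ (r - 1) * x.
Proof.
move=> x0; rewrite -{3}(powRr1 (ltW x0)) -powRD; first by rewrite subrK.
by rewrite (gt_eqF x0) implybT.
Qed.

Lemma is_derive_powR_affine (b c s : R) : 0 < 1 + 2 * s ->
  is_derive s 1 (fun z : R => c * (1 + 2 * z) `^ b)
    (c * (b * (1 + 2 * s) `^ (b - 1) * 2)).
Proof.
move=> s_gt; have affine : is_derive s 1 (fun z : R => 1 + 2 * z) 2.
  by apply: is_derive_eq (is_deriveD _ (is_deriveZ 2 _)) _; rewrite add0r scaler1.
have : is_derive s 1 ((@powR R ^~ b) \o (fun z : R => 1 + 2 * z))
    (b * (1 + 2 * s) `^ (b - 1) * 2).
  by apply: is_derive1_comp; exact: is_derive1_powR.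
by move=> /(is_deriveZ c) [].
Qed.

End PowR.

Section PowerF.
Context {R : realType} (a : R).

Lemma F1E (s : R) : 0 < 1 + 2 * s -> F1 a s = 2 * a * (1 + 2 * s) `^ (a - 1).
Proof.
move=> s_gt; rewrite /F1 derive1E.
have -> : Fa a = (fun z : R => 1 * (1 + 2 * z) `^ a).
  by apply/funext => z; rewrite mul1r.
by rewrite (derive_val (is_derive := is_derive_powR_affine a 1 s s_gt)); ring.
Qed.

Lemma F2E (s : R) : 0 < 1 + 2 * s ->
  F2 a s = 4 * a * (a - 1) * (1 + 2 * s) `^ (a - 2).
Proof.
move=> s_gt; rewrite /F2 derive1E.
rewrite (@near_eq_derive _ _ _ _ (fun z : R => (2 * a) * (1 + 2 * z) `^ (a - 1))).
  rewrite (derive_val (is_derive := is_derive_powR_affine (a - 1) (2 * a) s s_gt)).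
  by rewrite -addrA -opprD; ring.
have s_gt' : - 2^-1 < s by lra.
near=> z; rewrite -/(F1 a z) F1E //.
near: z; apply: filterS (lt_nbhsr s_gt') => z; lra.
Unshelve. all: by end_near. Qed.

Lemma Bq_Fa_ge0 (al e ph : R) : 0 < a <= 1 -> al ^+ 2 <= 1 -> 0 <= e -> 0 <= ph ->
  0 <= Bq (F1 a) (F2 a) al e ph.
Proof.
move=> /andP[a_gt0 a_le1] al_le1 e0 ph0.
have lam0 : 0 <= al ^+ 2 := sqr_ge0 al.
have A_gt0 : 0 < 1 + 2 * (al ^+ 2 * e) by have := mulr_ge0 lam0 e0; lra.
have B_gt0 : 0 < 1 + 2 * e by lra.
rewrite /Bq !F1E // !F2E // (@powR_subr1 _ _ (a - 1) A_gt0) (@powR_subr1 _ _ (a - 1) B_gt0).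
have -> : a - 1 - 1 = a - 2 by ring.
have PA_gt0 := powR_gt0 (a - 2) A_gt0; have PB_gt0 := powR_gt0 (a - 2) B_gt0.
set lam := al ^+ 2 in al_le1 lam0 A_gt0 PA_gt0 *.
set A := 1 + 2 * (lam * e) in A_gt0 PA_gt0 *; set B := 1 + 2 * e in B_gt0 PB_gt0 *.
have -> : (4 * a * (a - 1) * A `^ (a - 2) / (2 * a * (A `^ (a - 2) * A)) * lam
           - 4 * a * (a - 1) * B `^ (a - 2) / (2 * a * (B `^ (a - 2) * B))) * ph
    = 2 * (1 - a) * (1 - lam) / (A * B) * ph.
  by rewrite /A /B; field; rewrite !gt_eqF.
by rewrite mulr_ge0 // divr_ge0 ?mulr_ge0 ?subr_ge0 // ltW.
Qed.

Lemma SF_FaE (e G p : R) : 0 <= e ->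
  SF (F1 a) (F2 a) e G p
  = 2 * a * (1 + 2 * e) `^ (a - 2) * ((1 + 2 * e) * (e * G - p) + 2 * (1 - a) * e * p).
Proof.
move=> e0; have B_gt0 : 0 < 1 + 2 * e by lra.
rewrite /SF F1E // F2E // (@powR_subr1 _ _ (a - 1) B_gt0).
have -> : a - 1 - 1 = a - 2 by ring.
by ring.
Qed.

(* With [A = 1 + 2 lam e <= B = 1 + 2 e], the difference of the two sides is
   [2 a lam ((A^(a-1) - lam B^(a-1)) (e G - p) + 2 (1 - a) lam e (A^(a-2) - B^(a-2)) p)],
   and [x |-> x^r] is antitone for the exponents [r = a - 1, a - 2 <= 0]. *)
Lemma SF_Fa_scale_le (lam e G p : R) : 0 <= a <= 1 -> 0 <= lam <= 1 -> 0 <= e ->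
  0 <= p <= e * G ->
  lam ^+ 2 * SF (F1 a) (F2 a) e G p <= SF (F1 a) (F2 a) (lam * e) G (lam * p).
Proof.
move=> /andP[a0 a1] /andP[lam0 lam1] e0 /andP[p0 pG].
have lame0 : 0 <= lam * e by exact: mulr_ge0.
rewrite !SF_FaE //.
have A_gt0 : 0 < 1 + 2 * (lam * e) by lra.
have AB : 1 + 2 * (lam * e) <= 1 + 2 * e by nra.
have PQ := le0_ger_powR (a - 2) _ _ ltac:(lra) A_gt0 AB.
have PAQB := le0_ger_powR (a - 1) _ _ ltac:(lra) A_gt0 AB.
rewrite !(@powR_subr1 _ _ (a - 1)) ?(lt_le_trans A_gt0 AB) // in PAQB.
rewrite (_ : a - 1 - 1 = a - 2) in PAQB; last by ring.
have Q0 : 0 <= (1 + 2 * e) `^ (a - 2) := powR_ge0 _ _.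
set A := 1 + 2 * (lam * e) in A_gt0 AB PQ PAQB *.
set B := 1 + 2 * e in AB PQ PAQB Q0 *.
set P := A `^ (a - 2) in PQ PAQB *; set Q := B `^ (a - 2) in PQ PAQB Q0 *.
rewrite -subr_ge0.
have -> : 2 * a * P * (A * (lam * e * G - lam * p) + 2 * (1 - a) * (lam * e) * (lam * p))
    - lam ^+ 2 * (2 * a * Q * (B * (e * G - p) + 2 * (1 - a) * e * p))
    = 2 * a * lam * ((P * A - lam * (Q * B)) * (e * G - p)
                     + 2 * (1 - a) * lam * e * (P - Q) * p) by ring.
have QB_ge0 : 0 <= Q * B by apply: mulr_ge0 => //; lra.
have PA_QB : 0 <= P * A - lam * (Q * B).
  by rewrite subr_ge0; apply: le_trans PAQB; rewrite ler_piMl.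
have P_Q : 0 <= P - Q by rewrite subr_ge0.
have eG_p : 0 <= e * G - p by rewrite subr_ge0.
have one_a : 0 <= 1 - a by rewrite subr_ge0.
apply: mulr_ge0; first by rewrite !mulr_ge0.
by apply: addr_ge0; rewrite !mulr_ge0.
Qed.

End PowerF.

Section Hyperbolic.
Context {R : realType}.

Lemma coshr_sinhr (t : R) : coshr t ^+ 2 - sinhr t ^+ 2 = 1.
Proof.
rewrite /coshr /sinhr; transitivity (expR t * expR (- t)).
  by field.
by rewrite -expRD subrr expR0.
Qed.

Lemma coshr_ge1 (t : R) : 1 <= coshr t.
Proof.
have sinhr2_ge0 : 0 <= sinhr t ^+ 2 := sqr_ge0 _.
have coshr_gt0 : 0 < coshr t by apply: divr_gt0; rewrite ?addr_gt0 ?expR_gt0.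
have := coshr_sinhr t; nra.
Qed.

Lemma sinhr_ge0 (t : R) : 0 <= t -> 0 <= sinhr t.
Proof. by move=> t0; rewrite divr_ge0 // subr_ge0 ler_expR; lra. Qed.

End Hyperbolic.

Section Dot.
Context {R : realType} {k : nat}.
Implicit Types (x y z : 'rV[R]_k).

Lemma dotC x y : dot x y = dot y x.
Proof. by apply: eq_bigr => i _; rewrite mulrC. Qed.

Lemma dotDl x y z : dot (x + y) z = dot x z + dot y z.
Proof. by rewrite /dot -big_split; apply: eq_bigr => i _; rewrite mxE mulrDl. Qed.

Lemma dotZl c x y : dot (c *: x) y = c * dot x y.
Proof. by rewrite /dot mulr_sumr; apply: eq_bigr => i _; rewrite mxE mulrA. Qed.

Lemma dotDr x y z : dot x (y + z) = dot x y + dot x z.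
Proof. by rewrite dotC dotDl !(dotC x). Qed.

Lemma dotZr c x y : dot x (c *: y) = c * dot x y.
Proof. by rewrite dotC dotZl dotC. Qed.

Lemma dotNl x y : dot (- x) y = - dot x y.
Proof. by rewrite -scaleN1r dotZl mulN1r. Qed.

Lemma dotNr x y : dot x (- y) = - dot x y.
Proof. by rewrite dotC dotNl dotC. Qed.

Lemma dot_ge0 x : 0 <= dot x x.
Proof. by rewrite sumr_ge0 // => i _; rewrite -expr2 sqr_ge0. Qed.

Lemma dot_gt0 x : x != 0 -> 0 < dot x x.
Proof.
move=> x0; rewrite lt_def dot_ge0 andbT; apply: contra x0 => /eqP dot0.
apply/eqP/rowP => j; rewrite mxE; apply/eqP; rewrite -sqrf_eq0 expr2.
by apply/eqP; apply: (psumr_eq0P _ dot0) => // i _; rewrite -expr2 sqr_ge0.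
Qed.

Lemma enorm_gt0 x : x != 0 -> 0 < enorm x.
Proof. by move=> x0; rewrite sqrtr_gt0 dot_gt0. Qed.

Lemma dot_normalize x : x != 0 -> dot ((enorm x)^-1 *: x) ((enorm x)^-1 *: x) = 1.
Proof.
move=> x0; have nx_neq0 : enorm x != 0 by rewrite gt_eqF // enorm_gt0.
rewrite dotZl dotZr -[dot x x]sqr_sqrtr ?dot_ge0 // -/(enorm x).
by field.
Qed.

Lemma dot_mulmxl m (X : 'rV[R]_m) (L : 'M[R]_(m, k)) y :
  dot (X *m L) y = \sum_i X 0 i * dot (row i L) y.
Proof.
rewrite /dot; under eq_bigr do rewrite mxE big_distrl /=.
rewrite exchange_big; apply: eq_bigr => i _; rewrite mulr_sumr.
by apply: eq_bigr => j _; rewrite mxE mulrA.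
Qed.

End Dot.

Section DeriveRow.
Context {R : realType} {k : nat}.
Notation V := 'rV[R]_k.

Lemma is_derive_affine (f : V -> R) x h l :
  (forall e : R, f (e *: h + x) = f x + e * l) -> is_derive x h f l.
Proof.
move=> f_affine.
have quotient_cst : {near (0 : R)^', (fun _ => l) =1
    (fun e : R => e^-1 *: ((f \o shift x) (e *: h) - f x))}.
  near=> e; rewrite /= f_affine addrC addKr /GRing.scale /= mulrA mulVf ?mul1r //.
  by near: e; exact: nbhs_dnbhs_neq.
have quotient_cvg := cvg_trans (near_eq_cvg quotient_cst) (cvg_cst l).
split; first by rewrite /derivable; apply/cvg_ex; exists l; exact: quotient_cvg.
by rewrite /derive; apply: cvg_lim => //; exact: quotient_cvg.
Unshelve. all: by end_near. Qed.

Lemma is_derive_inv {f : V -> R} {x h : V} {df : R} : f x != 0 -> is_derive x h f df ->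
  is_derive x h (fun z => (f z)^-1) (- (f x) ^-2 * df).
Proof.
move=> fx_neq0 [f_derivable f_derive]; split; first exact: derivableV.
by rewrite deriveV // f_derive.
Qed.

End DeriveRow.

Section ConformalFlow.
Context {R : realType} {k : nat} (v : 'rV[R]_k) (t : R).
Hypothesis v_neq0 : v != 0.

Let u := (enorm v)^-1 *: v.
Let c := coshr t.
Let s := sinhr t.
Let D (y : 'rV[R]_k) := c + dot u y * s.

Lemma conf_factorE y : conf_factor v t y = (D y)^-1.
Proof.
have nv_neq0 : enorm v != 0 by rewrite gt_eqF // enorm_gt0.
rewrite /conf_factor -/c -/s.
have -> : enorm v * c + dot v y * s = enorm v * D y by rewrite /D /u dotZl; field.
by rewrite invfM mulrA mulfV ?mul1r.
Qed.

Lemma conf_flow_coordE z j :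
  conf_flow v t z 0 j = (z 0 j + dot u z * (c - 1) * u 0 j + s * u 0 j) / D z.
Proof. by rewrite !mxE -/u -/c -/s -/(D z); ring. Qed.

Lemma is_derive_conf_flow_coord y h j : D y != 0 ->
  is_derive y h (fun z => conf_flow v t z 0 j)
    ((D y)^-1 * h 0 j - s * dot u h / D y ^+ 2 * y 0 j
     + dot u h * (1 - c) / D y ^+ 2 * u 0 j).
Proof.
move=> Dy_neq0.
have dN : is_derive y h (fun z => z 0 j + dot u z * (c - 1) * u 0 j + s * u 0 j)
    (h 0 j + dot u h * (c - 1) * u 0 j).
  by apply: is_derive_affine => e; rewrite !mxE dotDr dotZr; ring.
have dD : is_derive y h D (dot u h * s).
  by apply: is_derive_affine => e; rewrite /D dotDr dotZr; ring.
have := is_deriveM dN (is_derive_inv Dy_neq0 dD).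
under [X in is_derive _ _ X]eq_fun do rewrite -conf_flow_coordE.
move=> /is_derive_eq; apply.
have cs := coshr_sinhr t; rewrite -/c -/s in cs.
rewrite /GRing.scale /=.
transitivity ((D y)^-1 * h 0 j - s * dot u h / D y ^+ 2 * y 0 j
     + dot u h * (1 - c) / D y ^+ 2 * u 0 j
     + dot u h / D y ^+ 2 * u 0 j * (c ^+ 2 - s ^+ 2 - 1)).
  by rewrite /D; field.
by rewrite cs subrr mulr0 addr0.
Qed.

Lemma derive_conf_flowE y h : D y != 0 ->
  derive (conf_flow v t) y h =
    (D y)^-1 *: h - (s * dot u h / D y ^+ 2) *: y + (dot u h * (1 - c) / D y ^+ 2) *: u.
Proof.
move=> Dy_neq0; rewrite derive_mx; last first.
  by apply/derivable_mxP => i j; rewrite (ord1 i); case: (is_derive_conf_flow_coord y h j Dy_neq0).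
apply/matrixP => i j; rewrite (ord1 i) mxE.
by have [_ ->] := is_derive_conf_flow_coord y h j Dy_neq0; rewrite !mxE.
Qed.

Lemma conf_flow_conformal y h1 h2 : conf_factor v t y != 0 ->
  dot y y = 1 -> dot h1 y = 0 -> dot h2 y = 0 ->
  dot (derive (conf_flow v t) y h1) (derive (conf_flow v t) y h2)
  = conf_factor v t y ^+ 2 * dot h1 h2.
Proof.
rewrite conf_factorE invr_eq0 => Dy_neq0 yy h1y h2y.
have uu : dot u u = 1 by exact: dot_normalize.
rewrite !derive_conf_flowE //; clearbody u.
rewrite !dotDl !dotDr !dotNl !dotNr !dotZl !dotZr.
rewrite (dotC y h2) (dotC h1 u) (dotC y u) uu yy h1y h2y.
have cs := coshr_sinhr t; rewrite -/c -/s in cs.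
(* [field] cannot use [c^2 - s^2 = 1]: isolate the discrepancy as a multiple of it. *)
transitivity ((D y)^-1 ^+ 2 * dot h1 h2
              + dot u h1 * dot u h2 / D y ^+ 4 * (1 - (c ^+ 2 - s ^+ 2))).
  by move: Dy_neq0; rewrite /D => Dy_neq0; field.
by rewrite cs subrr mulr0 addr0.
Qed.

Lemma conf_factor_itv y : 0 <= t -> 0 <= dot v y -> 0 < conf_factor v t y <= 1.
Proof.
move=> t_ge0 vy_ge0; rewrite conf_factorE.
have uy_ge0 : 0 <= dot u y by rewrite /u dotZl mulr_ge0 // invr_ge0 ltW // enorm_gt0.
have Dy_ge1 : 1 <= D y.
  have := coshr_ge1 t; have := mulr_ge0 uy_ge0 (sinhr_ge0 t t_ge0).
  by rewrite /D -/c -/s; lra.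
by rewrite invr_gt0 invf_le1 ?(lt_le_trans ltr01).
Qed.

End ConformalFlow.

Section Energy.
Context {R : realType} {m : nat}.
Implicit Types (g G : 'M[R]_m).

Lemma half_energyZ g G c : half_energy g (c *: G) = c * half_energy g G.
Proof. by rewrite /half_energy -scalemxAr mxtraceZ mulrA. Qed.

Lemma half_energy_ge0 g G (p : 'rV[R]_m -> R) :
  (forall X, X != 0 -> 0 < quad g X) -> (forall X, 0 <= p X) ->
  (forall X, 0 <= S0 (half_energy g G) (quad g X) (p X)) -> 0 <= half_energy g G.
Proof.
case: m g G p => [|m'] g G p g_posdef p_ge0 S0_ge0.
  by rewrite /half_energy /mxtrace big_ord0 mul0r.
have one_neq0 : (const_mx 1 : 'rV[R]_m'.+1) != 0.
  by apply/eqP => /matrixP /(_ 0 0); rewrite !mxE => /eqP; rewrite oner_eq0.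
have := g_posdef _ one_neq0; have := p_ge0 (const_mx 1); have := S0_ge0 (const_mx 1).
rewrite /S0 => ? ? q_gt0.
by rewrite -(pmulr_lge0 _ q_gt0); lra.
Qed.

Lemma gram_dflow_comp k (v : 'rV[R]_k) t y (L : 'M[R]_(m, k)) :
  v != 0 -> conf_factor v t y != 0 -> dot y y = 1 ->
  (forall i, dot (row i L) y = 0) ->
  gram (dflow_comp v t y L) = conf_factor v t y ^+ 2 *: gram L.
Proof.
move=> v_neq0 al_neq0 yy L_tangent.
have row_dflow i : row i (dflow_comp v t y L) = derive (conf_flow v t) y (row i L).
  by apply/rowP => j; rewrite !mxE.
apply/matrixP => i j; rewrite !mxE !row_dflow.
exact: conf_flow_conformal.
Qed.

End Energy.

Theorem mainTheorem5 (R : realType) (m n : nat) (M : Type)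
  (g : M -> 'M[R]_m) (phi : M -> 'rV[R]_n.+1) (dphi : M -> 'M[R]_(m, n.+1))
  (a : R) (v : 'rV[R]_n.+1) :
  (forall x, (g x)^T = g x) ->
  (forall x (X : 'rV[R]_m), X != 0 -> 0 < quad (g x) X) ->
  (forall x, dot (phi x) (phi x) = 1) ->
  (forall x (i : 'I_m), dot (row i (dphi x)) (phi x) = 0) ->
  0 < a < 1 ->
  v != 0 ->
  (forall x, 0 <= dot v (phi x)) ->
  (forall x (X : 'rV[R]_m),
     0 <= S0 (half_energy (g x) (gram (dphi x))) (quad (g x) X)
             (dot (X *m dphi x) (X *m dphi x))) ->
  forall t : R, 0 <= t ->
  forall x : M,
    0 <= Bq (F1 a) (F2 a) (conf_factor v t (phi x))
            (half_energy (g x) (gram (dphi x))) (dot v (phi x))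
    /\
    forall X : 'rV[R]_m,
      conf_factor v t (phi x) ^+ 4 *
        SF (F1 a) (F2 a) (half_energy (g x) (gram (dphi x))) (quad (g x) X)
           (dot (X *m dphi x) (X *m dphi x))
      <=
      SF (F1 a) (F2 a)
         (half_energy (g x) (gram (dflow_comp v t (phi x) (dphi x)))) (quad (g x) X)
         (dot (derive (conf_flow v t) (phi x) (X *m dphi x))
              (derive (conf_flow v t) (phi x) (X *m dphi x))).
Proof.
move=> _ g_posdef phi_sphere dphi_tangent /andP[a_gt0 a_lt1] v_neq0 v_phi_ge0 S_ge0
  t t_ge0 x.
have /andP[al_gt0 al_le1] := conf_factor_itv v t v_neq0 (phi x) t_ge0 (v_phi_ge0 x).
have al_neq0 : conf_factor v t (phi x) != 0 by rewrite gt_eqF.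
have al2_le1 := exprn_ile1 2 (ltW al_gt0) al_le1.
have e_ge0 := half_energy_ge0 _ _ _ (g_posdef x) (fun X => dot_ge0 (X *m dphi x)) (S_ge0 x).
split; first by apply: Bq_Fa_ge0; rewrite // a_gt0 ltW.
move=> X; have S_X := S_ge0 x X; rewrite /S0 subr_ge0 in S_X.
have dphiX_tangent : dot (X *m dphi x) (phi x) = 0.
  by rewrite dot_mulmxl big1 // => i _; rewrite dphi_tangent mulr0.
rewrite gram_dflow_comp // half_energyZ conf_flow_conformal // -[4%N]/(2 * 2)%N exprM.
by apply: SF_Fa_scale_le; rewrite ?(ltW a_gt0) ?(ltW a_lt1) ?sqr_ge0 ?dot_ge0.
Qed.
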